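(* Let $q\ge1$, $M>0$, and let $\{J_i\}_{i=1}^m$ be an assignment satisfying $\mathbb{E}\big[(\sum_{i=1}^m(\sum_{j\in J_i}Y_j)^q)^{1/q}\big]\le M$. Then $\sum_{i=1}^m\big(\sum_{j\in J_i}\mathbb{E}[Y'_j]\big)^q\le M^q$.
   Context: Nonnegative random variables $X_{ij}$ (size of job $j$ on machine $i$), independent across different jobs. For an assignment $\{J_i\}$ (partition of $[n]$), $Y_j:=X_{ij}$ where $j\in J_i$. Truncated part $Y'_j:=Y_j\mathbf{1}[Y_j\le M]$. *)

From HB Require Import structures.
From mathcomp Require Import all_boot all_order all_algebra.
From mathcomp Require Import all_classical all_reals all_analysis.
Set Implicit Arguments. Unset Strict Implicit. Unset Printing Implicit Defensive.
Import Order.TTheory GRing.Theory Num.Theory.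
Local Open Scope classical_set_scope.
Local Open Scope ring_scope.

(* X i j : size of job j (in 'I_n) on machine i (in 'I_m), a random variable on T. *)

(** Stated via the product rule on
    measurable rectangles (a pi-system generating the Borel sigma-algebra of
    R^m), for the whole family of jobs (taking A i j = setT recovers every
    subfamily). *)
Definition jobs_independent d (T : measurableType d) (R : realType)
  (P : probability T R) (m n : nat) (X : 'I_m -> 'I_n -> T -> R) : Prop :=
  forall A : 'I_m -> 'I_n -> set R,
    (forall i j, measurable (A i j)) ->
    P (\bigcap_(j in [set: 'I_n]) \bigcap_(i in [set: 'I_m]) (X i j @^-1` A i j))
    = (\prod_(j < n) P (\bigcap_(i in [set: 'I_m]) (X i j @^-1` A i j)))%E.

(** An assignment {J_i} (partition of [n] into m blocks) is encoded by the
    function a : 'I_n -> 'I_m, J_i = [set j | a j == i]. *)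
Definition Yj (m n : nat) (T : Type) (R : Type) (X : 'I_m -> 'I_n -> T -> R)
  (a : 'I_n -> 'I_m) (j : 'I_n) : T -> R := X (a j) j.

Definition Ytrunc (R : realType) (m n : nat) (T : Type) (X : 'I_m -> 'I_n -> T -> R)
  (a : 'I_n -> 'I_m) (M : R) (j : 'I_n) : T -> R :=
  fun w => if Yj X a j w <= M then Yj X a j w else 0.

From HB Require Import structures.
From mathcomp Require Import all_boot all_order all_algebra.
From mathcomp Require Import all_classical all_reals all_analysis.
From mathcomp Require Import measurable_realfun ring.
Set Implicit Arguments. Unset Strict Implicit. Unset Printing Implicit Defensive.
Import Order.TTheory GRing.Theory Num.Theory.
Local Open Scope classical_set_scope.
Local Open Scope ring_scope.

(* Write c_i for the sum of E[Y'_j] over j in J_i and N for the sum of the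
   c_i^q.  By linearity N = E[sum_i c_i^(q-1) sum_(j in J_i) Y'_j], and the
   Hoelder inequality with the conjugate exponent q/(q-1), applied pointwise,
   bounds the integrand by N^(1-1/q) times the l^q norm of the block sums of
   the Y'_j.  Hence N^(1/q) <= E[l^q norm of the block sums of Y'] <= M, since
   Y' <= Y.  Truncation only makes the expectations finite. *)

Section lp_norm.
Variable R : realType.
Implicit Types (p q r : R).

Definition lp_norm (m : nat) (p : R) (v : 'I_m -> R) : R :=
  (\sum_i v i `^ p) `^ p^-1.

Lemma powR_invK (x p : R) : 0 <= x -> 0 < p -> (x `^ p^-1) `^ p = x.
Proof. by move=> x0 p0; rewrite -powRrM mulVf ?gt_eqF // powRr1. Qed.

Lemma le_powR2r r (x y : R) : 0 <= r -> 0 <= x -> x <= y -> x `^ r <= y `^ r.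
Proof. by move=> r0 x0 xy; apply: ge0_ler_powR; rewrite ?nnegrE ?(le_trans x0 xy). Qed.

Lemma lp_norm_ge0 m p (v : 'I_m -> R) : 0 <= lp_norm p v.
Proof. exact: powR_ge0. Qed.

Lemma le_lp_norm m p (u v : 'I_m -> R) : 0 < p ->
  (forall i, 0 <= u i <= v i) -> lp_norm p u <= lp_norm p v.
Proof.
move=> p0 uv.
apply: le_powR2r; first by rewrite invr_ge0 ltW.
  by apply: sumr_ge0 => i _; exact: powR_ge0.
by apply: ler_sum => i _; have /andP[u0 uvi] := uv i; apply: le_powR2r => //; exact: ltW.
Qed.

Lemma sum_powR_le_of_lp_norm_le m p (v : 'I_m -> R) (M : R) : 0 < p ->
  lp_norm p v <= M -> \sum_i v i `^ p <= M `^ p.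
Proof.
move=> p0 vM; rewrite -(@powR_invK (\sum_i v i `^ p) p) ?sumr_ge0 // => [|i _].
  by apply: le_powR2r => //; [exact: ltW | exact: lp_norm_ge0].
exact: powR_ge0.
Qed.

Lemma hoelder_sum m (u v : 'I_m -> R) (p r : R) :
  (forall i, 0 <= u i) -> (forall i, 0 <= v i) -> 0 < p -> 0 < r ->
  p^-1 + r^-1 = 1 -> \sum_i u i * v i <= lp_norm p u * lp_norm r v.
Proof.
move=> + + p0 r0 pr; elim: m u v => [|m IH] u v u0 v0.
  by rewrite big_ord0 mulr_ge0 ?lp_norm_ge0.
rewrite /lp_norm !big_ord_recr /=.
set U := \sum_(i < m) u (widen_ord (leqnSn m) i) `^ p.
set V := \sum_(i < m) v (widen_ord (leqnSn m) i) `^ r.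
have U0 : 0 <= U by rewrite sumr_ge0 // => i _; exact: powR_ge0.
have V0 : 0 <= V by rewrite sumr_ge0 // => i _; exact: powR_ge0.
apply: le_trans (lerD (IH _ _ (fun i => u0 _) (fun i => v0 _)) (lexx _)) _.
have := hoelder2 (powR_ge0 U p^-1) (u0 ord_max) (powR_ge0 V r^-1) (v0 ord_max) p0 r0 pr.
by rewrite !powR_invK.
Qed.

Lemma sum_mul_powR_le m (u c : 'I_m -> R) (q : R) : 1 <= q ->
  (forall i, 0 <= u i) -> (forall i, 0 <= c i) ->
  \sum_i u i * c i `^ (q - 1) <= lp_norm q u * (\sum_i c i `^ q) `^ (1 - q^-1).
Proof.
move=> q1 u0 c0; have [->|qn1] := eqVneq q 1.
  rewrite /lp_norm invr1 subrr powRr0 mulr1 powRr1 ?sumr_ge0 // => [|i _].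
    by apply: ler_sum => i _; rewrite powRr0 mulr1 powRr1.
  exact: powR_ge0.
have q1' : 1 < q by rewrite lt_neqAle eq_sym qn1.
have q0 : 0 < q by apply: lt_trans q1'.
have qm0 : 0 < q - 1 by rewrite subr_gt0.
set r := q / (q - 1).
have r0 : 0 < r by rewrite divr_gt0.
have qr : q^-1 + r^-1 = 1 by rewrite /r invf_div; field; rewrite gt_eqF.
have -> : 1 - q^-1 = r^-1 by rewrite -qr addrC addKr.
have -> : \sum_i c i `^ q = \sum_i (c i `^ (q - 1)) `^ r.
  by apply: eq_bigr => i _; rewrite -powRrM /r mulrC divfK ?gt_eqF.
by apply: hoelder_sum => // i; exact: powR_ge0.
Qed.

Lemma powRV_le_of_le_mul_powR (N q r : R) : 0 <= N -> 0 < q -> 0 <= r ->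
  N <= r * N `^ (1 - q^-1) -> N `^ q^-1 <= r.
Proof.
move=> N0 q0 r0 hN; have [->|Nn0] := eqVneq N 0.
  by rewrite powR0 ?invr_eq0 ?gt_eqF.
have Npos : 0 < N by rewrite lt_neqAle eq_sym Nn0.
have NE : N = N `^ q^-1 * N `^ (1 - q^-1).
  by rewrite -powRD ?Nn0 ?implybT // addrC subrK powRr1.
by rewrite -(ler_pM2r (powR_gt0 (1 - q^-1) Npos)) -NE.
Qed.

End lp_norm.

Section expectation_lp_norm.
Local Open Scope ereal_scope.
Context d (T : measurableType d) (R : realType) (P : probability T R).

Lemma measurable_lp_norm m (p : R) (W : 'I_m -> T -> R) :
  (forall i, measurable_fun setT (W i)) ->
  measurable_fun setT (fun w => lp_norm p (W ^~ w)).
Proof.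
move=> mW; apply: (measurableT_comp (measurable_powR _)).
by apply: measurable_sum => i; exact: (measurableT_comp (measurable_powR _)).
Qed.

Lemma bounded_integral_fin_num (f : T -> R) (M : R) :
  measurable_fun setT f -> (forall w, 0 <= f w <= M)%R ->
  \int[P]_w (f w)%:E \is a fin_num.
Proof.
move=> mf fM; have f0 w : (0 <= f w)%R by case/andP: (fM w).
rewrite ge0_fin_numE; last by apply: integral_ge0 => w _; rewrite lee_fin.
apply: (@le_lt_trans _ _ (\int[P]_w (cst M%:E) w)).
  apply: ge0_le_integral => //.
  - by move=> w _; rewrite lee_fin.
  - exact/measurable_EFinP.
  - by move=> w _; rewrite lee_fin; case/andP: (fM w).
by rewrite integral_cst // [X in (_ * X)%E]probability_setT mule1 ltry.
Qed.

Lemma measurable_sum_cond n (Q : pred 'I_n) (h : 'I_n -> T -> R) :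
  (forall j, measurable_fun setT (h j)) ->
  measurable_fun setT (fun w => \sum_(j < n | Q j) h j w)%R.
Proof. by move=> mh; under eq_fun do rewrite -big_filter; exact: measurable_sum. Qed.

Lemma ge0_integral_bigsum n (Q : pred 'I_n) (h : 'I_n -> T -> R) :
  (forall j, measurable_fun setT (h j)) -> (forall j w, 0 <= h j w)%R ->
  \int[P]_w (\sum_(j < n | Q j) h j w)%:E
    = \sum_(j < n | Q j) \int[P]_w (h j w)%:E.
Proof.
move=> mh h0; under eq_integral do rewrite -sumEFin -big_filter.
rewrite ge0_integral_sum ?big_filter // => [j|j w _].
- exact/measurable_EFinP.
- by rewrite lee_fin.
Qed.

Lemma lp_norm_expectation_le m (q : R) (W : 'I_m -> T -> R) : (1 <= q)%R ->
  (forall i, measurable_fun setT (W i)) -> (forall i w, 0 <= W i w)%R ->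
  (forall i, \int[P]_w (W i w)%:E \is a fin_num) ->
  (lp_norm q (fun i => fine (\int[P]_w (W i w)%:E)))%:E
    <= \int[P]_w (lp_norm q (W ^~ w))%:E.
Proof.
move=> q1 mW W0 Wfin; have q0 : (0 < q)%R by apply: lt_le_trans q1.
set c := fun i => fine (\int[P]_w (W i w)%:E).
have c0 i : (0 <= c i)%R.
  by apply: fine_ge0; apply: integral_ge0 => w _; rewrite lee_fin.
set F := fun w => lp_norm q (W ^~ w).
have mF : measurable_fun setT F by exact: measurable_lp_norm.
have EF0 : 0 <= \int[P]_w (F w)%:E.
  by apply: integral_ge0 => w _; rewrite lee_fin lp_norm_ge0.
set N := (\sum_i c i `^ q)%R; set K := (N `^ (1 - q^-1))%R.
have K0 : (0 <= K)%R by exact: powR_ge0.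
have NE : N%:E = \int[P]_w (\sum_i c i `^ (q - 1) * W i w)%:E.
  rewrite ge0_integral_bigsum => [|i|i w]; last 2 first.
  - by apply: measurable_funM => //; exact: measurable_cst.
  - by rewrite mulr_ge0 ?powR_ge0.
  rewrite /N -sumEFin; apply: eq_bigr => i _.
  rewrite -[(c i `^ q)%R]mulr_powRB1 // mulrC EFinM.
  under eq_integral do rewrite EFinM.
  rewrite ge0_integralZl_EFin ?powR_ge0 //.
  - by rewrite fineK.
  - by move=> w _; rewrite lee_fin.
  - exact/measurable_EFinP.
case EFE: (\int[P]_w (F w)%:E) EF0 => [r| |] // r0; last by rewrite leey.
rewrite lee_fin; apply: powRV_le_of_le_mul_powR => //.
  by apply: sumr_ge0 => i _; exact: powR_ge0.
have mFE : measurable_fun setT (EFin \o F) by exact/measurable_EFinP.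
rewrite -lee_fin -/N -/K NE EFinM -EFE -(ge0_integralZr P measurableT mFE); last 2 first.
- by move=> w _; rewrite lee_fin lp_norm_ge0.
- by rewrite lee_fin.
apply: ge0_le_integral; first exact: measurableT.
- by move=> w _; rewrite lee_fin sumr_ge0 // => i _; rewrite mulr_ge0 ?powR_ge0.
- apply/measurable_EFinP; apply: measurable_sum => i.
  by apply: measurable_funM => //; exact: measurable_cst.
- exact: (emeasurable_funM mFE (measurable_cst _)).
move=> w _; rewrite /= -EFinM lee_fin.
under eq_bigr do rewrite mulrC.
exact: sum_mul_powR_le.
Qed.
Lemma le_expectation_lp_norm m (q : R) (U V : 'I_m -> T -> R) : (0 < q)%R ->
  (forall i, measurable_fun setT (U i)) -> (forall i, measurable_fun setT (V i)) ->
  (forall i w, 0 <= U i w <= V i w)%R ->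
  \int[P]_w (lp_norm q (U ^~ w))%:E <= \int[P]_w (lp_norm q (V ^~ w))%:E.
Proof.
move=> q0 mU mV UV; apply: ge0_le_integral; first exact: measurableT.
- by move=> w _; rewrite lee_fin lp_norm_ge0.
- by apply/measurable_EFinP; exact: measurable_lp_norm.
- by apply/measurable_EFinP; exact: measurable_lp_norm.
by move=> w _; rewrite lee_fin; exact: le_lp_norm.
Qed.

End expectation_lp_norm.

Section truncation.
Context (R : realType) (T : Type) (m n : nat) (X : 'I_m -> 'I_n -> T -> R).
Context (a : 'I_n -> 'I_m) (M : R).
Hypothesis X0 : forall i j w, 0 <= X i j w.

Lemma Ytrunc_ge0 j w : 0 <= Ytrunc X a M j w.
Proof. by rewrite /Ytrunc; case: ifP => // _; exact: X0. Qed.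

Lemma Ytrunc_le_Yj j w : Ytrunc X a M j w <= Yj X a j w.
Proof. by rewrite /Ytrunc; case: ifP => // _; exact: X0. Qed.

Lemma Ytrunc_le j w : 0 <= M -> Ytrunc X a M j w <= M.
Proof. by rewrite /Ytrunc; case: ifP. Qed.

End truncation.

Lemma measurable_Ytrunc d (T : measurableType d) (R : realType) m n
    (X : 'I_m -> 'I_n -> T -> R) (a : 'I_n -> 'I_m) (M : R) j :
  (forall i j, measurable_fun setT (X i j)) ->
  measurable_fun setT (Ytrunc X a M j).
Proof.
move=> mX; apply: measurable_fun_ifT.
- exact: measurable_fun_ler (mX _ _) (measurable_cst M).
- exact: mX.
- exact: measurable_cst.
Qed.

Theorem mainTheorem12 (d : measure_display) (T : measurableType d) (R : realType)
  (P : probability T R) (m n : nat) (X : 'I_m -> 'I_n -> T -> R)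
  (a : 'I_n -> 'I_m) (q M : R) :
  (forall i j, measurable_fun setT (X i j)) ->
  (forall i j w, 0 <= X i j w) ->
  jobs_independent P X ->
  1 <= q -> 0 < M ->
  (\int[P]_w (((\sum_(i < m) (\sum_(j < n | a j == i) Yj X a j w) `^ q) `^ q^-1)%:E)
     <= M%:E)%E ->
  \sum_(i < m) (\sum_(j < n | a j == i) fine (\int[P]_w (Ytrunc X a M j w)%:E)) `^ q
    <= M `^ q.
Proof.
move=> mX X0 _ q1 M0 EM; have q0 : 0 < q by apply: lt_le_trans q1.
pose Y' j := Ytrunc X a M j.
have mY' j : measurable_fun setT (Y' j) by exact: measurable_Ytrunc.
have Y'0 j w : 0 <= Y' j w by exact: Ytrunc_ge0.
have EY'fin j : (\int[P]_w (Y' j w)%:E \is a fin_num)%E.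
  apply: (bounded_integral_fin_num _ (mY' j)) => w.
  by rewrite Y'0 /=; apply: Ytrunc_le; exact: ltW.
pose W i w := \sum_(j < n | a j == i) Y' j w.
have EW i : (\int[P]_w (W i w)%:E = \sum_(j < n | a j == i) \int[P]_w (Y' j w)%:E)%E.
  exact: ge0_integral_bigsum.
have EWfin i : (\int[P]_w (W i w)%:E \is a fin_num)%E.
  by rewrite EW; apply/sum_fin_numP => j _ _.
rewrite (eq_bigr (fun i => fine (\int[P]_w (W i w)%:E) `^ q)); last first.
  by move=> i _; rewrite EW -sum_fine.
apply: sum_powR_le_of_lp_norm_le => //; rewrite -lee_fin.
have mW i : measurable_fun setT (W i) by exact: measurable_sum_cond.
have W0 i w : 0 <= W i w by exact: sumr_ge0.
apply: le_trans (lp_norm_expectation_le q1 mW W0 EWfin) (le_trans _ EM).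
apply: (@le_expectation_lp_norm _ _ _ P _ _ W
  (fun i w => \sum_(j < n | a j == i) Yj X a j w) q0 mW).
  by move=> i; apply: measurable_sum_cond => j; exact: mX.
move=> i w; rewrite W0 /=; apply: ler_sum => j _; exact: Ytrunc_le_Yj.
Qed.
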